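(* Let $n,m\ge 1$, $X=\{x_1,\dots,x_m\}$, and for each $1\le i\le n$ let $A_i,B_i$ be nonempty subsets of $X$ with $A_i\cap B_i=\emptyset$. Let $\Sigma=\{A_i\rightarrow B_i:1\le i\le n\}$, a set of implications on $X$. Let $Y=\{y_1,\dots,y_n\}$ be a set disjoint from $X$, and let $\Sigma'$ be the set of implications on $X\cup Y$ consisting of $(A_i\cup (Y\setminus\{y_i\}))\rightarrow B_i$ for $1\le i\le n$, together with $Y\rightarrow X$. Then every optimum basis of the closure system on $X\cup Y$ associated with $\Sigma'$ is of the form $\{(A_i\cup(Y\setminus\{y_i\}))\rightarrow B_i: 1\le i\le n\}\cup\{Y\rightarrow S\}$, where $S$ is a minimum cardinality generator of the closure system on $X$ associated with $\Sigma$.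
   Context: An implication on a set $Z$ is a pair $A\rightarrow B$ with $A,B\subseteq Z$, $B\ne\emptyset$. For a set $\Sigma$ of implications on $Z$, the associated closure system $\langle Z,\phi\rangle$ has as closed sets exactly the $S\subseteq Z$ such that $A\subseteq S$ implies $B\subseteq S$ for every $(A\rightarrow B)\in\Sigma$, and $\phi(A)$ is the intersection of closed sets containing $A$. A set of implications is an implication basis of a closure system if its associated closure system has the same closed sets. The size of a set of implications $\{A_k\rightarrow B_k\}$ is $\sum_k(|A_k|+|B_k|)$; an optimum basis of a finite closure system is an implication basis of minimum size among all its implication bases. A generator of a closure system $\langle X,\phi\rangle$ is a set $S\subseteq X$ with $\phi(S)=X$; a minimum cardinality generator is a generator of least cardinality. *)

From mathcomp Require Import all_boot.
Set Implicit Arguments. Unset Strict Implicit. Unset Printing Implicit Defensive.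

(* An implication A -> B on a finite set T is a pair (A, B); a set of
   implications is a finite set of such pairs. *)
Section Impl.
Variable T : finType.

Definition implication_set (Sig : {set {set T} * {set T}}) : bool :=
  [forall p in Sig, p.2 != set0].

Definition closedb (Sig : {set {set T} * {set T}}) (S : {set T}) : bool :=
  [forall p in Sig, (p.1 \subset S) ==> (p.2 \subset S)].

Definition closure (Sig : {set {set T} * {set T}}) (S : {set T}) : {set T} :=
  \bigcap_(C | closedb Sig C && (S \subset C)) C.

Definition is_basis (Sig Gam : {set {set T} * {set T}}) : Prop :=
  implication_set Gam /\ forall C : {set T}, closedb Gam C = closedb Sig C.

Definition impl_size (Gam : {set {set T} * {set T}}) : nat :=
  \sum_(p in Gam) (#|p.1| + #|p.2|).

Definition optimum_basis (Sig Gam : {set {set T} * {set T}}) : Prop :=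
  is_basis Sig Gam /\
  forall Gam', is_basis Sig Gam' -> impl_size Gam <= impl_size Gam'.

Definition generator (Sig : {set {set T} * {set T}}) (S : {set T}) : Prop :=
  closure Sig S = setT.

Definition min_generator (Sig : {set {set T} * {set T}}) (S : {set T}) : Prop :=
  generator Sig S /\ forall S', generator Sig S' -> #|S| <= #|S'|.
End Impl.

(* X = 'I_m, Y = 'I_n, X u Y represented as the disjoint sum 'I_m + 'I_n *)
Definition liftX (m n : nat) (S : {set 'I_m}) : {set 'I_m + 'I_n} :=
  [set inl x | x in S].
Definition liftY (m n : nat) (S : {set 'I_n}) : {set 'I_m + 'I_n} :=
  [set inr y | y in S].

Definition Sigma (n m : nat) (A B : 'I_n -> {set 'I_m}) : {set {set 'I_m} * {set 'I_m}} :=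
  [set (A i, B i) | i : 'I_n].

Definition Sigma'_main (n m : nat) (A B : 'I_n -> {set 'I_m})
  : {set {set 'I_m + 'I_n} * {set 'I_m + 'I_n}} :=
  [set (liftX n (A i) :|: liftY m [set~ i], liftX n (B i)) | i : 'I_n].

Definition Sigma' (n m : nat) (A B : 'I_n -> {set 'I_m})
  : {set {set 'I_m + 'I_n} * {set 'I_m + 'I_n}} :=
  Sigma'_main A B :|: [set (liftY m setT, liftX n setT)].

(* Write P_i = A_i u (Y \ {y_i}).  An optimum basis contains no trivial
   implication, so each of its premises is non-closed for Sigma'.  A set
   missing y_i is non-closed only if it contains P_i but not B_i, so every
   implication with a premise missing y_i has premise containing P_i and
   conclusion inside premise u B_i; the remaining implications have Y in
   their premise.  Each of these n + 1 groups may be traded for the single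
   implication P_i -> B_i, resp. Y -> S with S the X-elements occurring in
   the group; counting premises and covered conclusions shows that
   optimality forces each group to be that implication.  Since the basis
   then reads Sigma'_main u {Y -> S}, S generates Sigma, and any generator
   S' gives a basis of the same shape whose size exceeds ours by
   |S'| - |S|. *)

From Pilot Require Import Defs.
From mathcomp Require Import all_boot zify.
Set Implicit Arguments. Unset Strict Implicit. Unset Printing Implicit Defensive.

Section ImplicationBases.
Variable T : finType.
Implicit Types (Sig Gam G H : {set {set T} * {set T}}) (r p q : {set T} * {set T}).
Implicit Types (S C : {set T}).

Lemma closedbP Sig C :
  reflect (forall p, p \in Sig -> p.1 \subset C -> p.2 \subset C) (closedb Sig C).
Proof.
by apply: (iffP forall_inP) => h p pSig; apply/implyP; apply: h.
Qed.

Lemma closedbU G H C : closedb (G :|: H) C = closedb G C && closedb H C.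
Proof.
apply/closedbP/andP => [h|[/closedbP hG /closedbP hH] p /setUP[]];
  [|exact: hG|exact: hH].
by split; apply/closedbP => p pS; apply: h; rewrite inE pS ?orbT.
Qed.

Lemma closedb1 r C : closedb [set r] C = (r.1 \subset C) ==> (r.2 \subset C).
Proof. by apply/closedbP/implyP => [h|h p /set1P ->]; [apply: h; rewrite set11|]. Qed.

Lemma closedb_imset (I : finType) (f : I -> {set T} * {set T}) C :
  closedb [set f i | i : I] C = [forall i, ((f i).1 \subset C) ==> ((f i).2 \subset C)].
Proof.
apply/closedbP/forallP => [h i|h _ /imsetP[i _ ->]]; last exact/implyP/h.
by apply/implyP; apply: h; apply: imset_f.
Qed.

Lemma closure_sub Sig S : S \subset Defs.closure Sig S.
Proof. by apply/bigcapsP => C /andP[]. Qed.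

Lemma closure_min Sig S C : closedb Sig C -> S \subset C -> Defs.closure Sig S \subset C.
Proof. by move=> clC SC; apply: bigcap_inf; rewrite clC SC. Qed.

Lemma closure_closed Sig S : closedb Sig (Defs.closure Sig S).
Proof.
apply/closedbP => p pSig p1S; apply/bigcapsP => C /andP[clC SC].
by apply: (closedbP _ _ clC _ pSig); apply: subset_trans p1S (closure_min clC SC).
Qed.

Lemma basis_sound Sig Gam C p : is_basis Sig Gam ->
  closedb Sig C -> p \in Gam -> p.1 \subset C -> p.2 \subset C.
Proof. by case=> _ eqcl; rewrite -eqcl => /closedbP; apply. Qed.

Lemma basis_violated Sig Gam C : is_basis Sig Gam -> ~~ closedb Sig C ->
  exists2 p, p \in Gam & (p.1 \subset C) && ~~ (p.2 \subset C).
Proof.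
case=> _ <-; rewrite negb_forall_in => /exists_inP[p pG].
by rewrite negb_imply; exists p.
Qed.

Lemma impl_size_setD G H : H \subset G ->
  impl_size G = impl_size (G :\: H) + impl_size H.
Proof. by move=> HG; rewrite /impl_size (big_setID H) (setIidPr HG) addnC. Qed.

Lemma impl_size_setU1 G r : r \notin G ->
  impl_size (G :|: [set r]) = impl_size G + (#|r.1| + #|r.2|).
Proof. by move=> rG; rewrite setUC [LHS]/impl_size big_setU1 //= addnC. Qed.

Lemma impl_size_setU1_le G r :
  impl_size (G :|: [set r]) <= impl_size G + (#|r.1| + #|r.2|).
Proof.
have [rG|/impl_size_setU1-> //] := boolP (r \in G).
by rewrite (setUidPl _) ?sub1set ?leq_addr.
Qed.

Lemma optimum_basis_nontrivial Sig Gam p : optimum_basis Sig Gam ->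
  p \in Gam -> ~~ (p.2 \subset p.1).
Proof.
case=> [[Gne eqcl] opt] pG; apply/negP => p21.
have p2_gt0 : 0 < #|p.2| by rewrite card_gt0 (forall_inP Gne).
have size_Gam : impl_size Gam = #|p.1| + #|p.2| + impl_size (Gam :\ p).
  by rewrite /impl_size (big_setD1 _ pG).
suff /opt : is_basis Sig (Gam :\ p) by rewrite size_Gam; lia.
split; first by apply/forall_inP => q /setD1P[_]; apply: (forall_inP Gne).
move=> C; rewrite -eqcl; apply/closedbP/closedbP => cl q qG; last first.
  by apply: cl; case/setD1P: qG.
have [->|qp] := eqVneq q p; first by move=> /(subset_trans p21).
by apply: cl; rewrite !inE qp.
Qed.

Lemma optimum_basis_replace Sig Gam H r : optimum_basis Sig Gam -> H \subset Gam ->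
  r.2 != set0 -> (forall C, closedb Sig C -> r.1 \subset C -> r.2 \subset C) ->
  (forall q, q \in H -> r.1 \subset q.1 /\ q.2 \subset q.1 :|: r.2) ->
  impl_size H <= #|r.1| + #|r.2|.
Proof.
case=> [[Gne eqcl] opt] HG r2 rSig Hr.
suff /opt : is_basis Sig ((Gam :\: H) :|: [set r]).
  by rewrite (impl_size_setD HG); have := impl_size_setU1_le (Gam :\: H) r; lia.
split.
  by apply/forall_inP => q /setUP[/setDP[qG _]|/set1P->] //; apply: (forall_inP Gne).
move=> C; rewrite closedbU closedb1; apply/idP/idP => [/andP[clD /implyP rC]|cl].
  rewrite -eqcl; apply/closedbP => q qG q1C.
  have [qH|qH] := boolP (q \in H); last by apply: (closedbP _ _ clD) q1C; rewrite inE qH qG.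
  have [r1q q2] := Hr q qH.
  by apply: subset_trans q2 _; rewrite subUset q1C rC // (subset_trans r1q).
apply/andP; split; last exact/implyP/rSig.
by apply/closedbP => q /setDP[qG _]; apply: (basis_sound (conj Gne eqcl) cl qG).
Qed.

Lemma card_bigcup_le (I : finType) (P : {pred I}) (F : I -> {set T}) :
  #|\bigcup_(i in P) F i| <= \sum_(i in P) #|F i|.
Proof.
elim/big_rec2: _ => [|i x y _ le_xy]; first by rewrite cards0.
by apply: leq_trans (leq_card_setU _ _) _; rewrite leq_add2l.
Qed.

(* Each implication of [H] pays [#|r.1|] for its premise, and together they
   pay [#|r.2|] for the covered conclusion; so a cheap [H] is a singleton. *)
Lemma impls_cover_eq1 H r r0 : 0 < #|r.1| -> r0 \in H -> r0.1 = r.1 ->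
  (forall q, q \in H -> r.1 \subset q.1) ->
  r.2 \subset \bigcup_(q in H) ((q.1 :|: q.2) :\: r.1) ->
  impl_size H <= #|r.1| + #|r.2| -> H = [set r].
Proof.
move=> r1_gt0 r0H r01 r1H cover le_r.
have q_lb q : q \in H -> #|r.1| + #|(q.1 :|: q.2) :\: r.1| <= #|q.1| + #|q.2|.
  move=> qH; apply: leq_trans (leq_card_setU q.1 q.2).
  rewrite -(cardsID r.1 (q.1 :|: q.2)) (setIidPr (subset_trans (r1H q qH) (subsetUl _ _))) //.
have H_lb : #|H| * #|r.1| + #|r.2| <= impl_size H.
  apply: (@leq_trans (\sum_(q in H) (#|r.1| + #|(q.1 :|: q.2) :\: r.1|))).
    rewrite big_split sum_nat_const /= mulnC leq_add2l.
    exact: leq_trans (subset_leq_card cover) (card_bigcup_le _ _).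
  exact: leq_sum.
have : #|H| * #|r.1| <= 1 * #|r.1| by lia.
rewrite leq_pmul2r // => H_le1.
have H_r0 : H = [set r0].
  by apply/eqP; rewrite eq_sym eqEcard sub1set r0H cards1.
move: le_r cover; rewrite H_r0 /impl_size !big_set1 r01 => le_r cover.
have r2r02 : r.2 \subset r0.2.
  apply/subsetP => x /(subsetP cover); rewrite !inE.
  by case/andP=> /negbTE-> /=.
have r02 : r0.2 = r.2.
  by apply/eqP; rewrite eq_sym eqEcard r2r02 -(leq_add2l #|r.1|).
by rewrite [r0]surjective_pairing r01 r02 -surjective_pairing.
Qed.

End ImplicationBases.

Section SigmaPrime.
Variables (n m : nat) (A B : 'I_n -> {set 'I_m}).
Hypotheses (n_gt0 : 0 < n) (m_gt0 : 0 < m) (A_neq0 : forall i, A i != set0)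
  (B_neq0 : forall i, B i != set0) (AB_disj : forall i, [disjoint A i & B i]).

Local Notation T := ('I_m + 'I_n)%type.
Local Notation LX := (liftX n).
Local Notation LY := (liftY m).
Local Notation Sig' := (Sigma' A B).
Implicit Types (x : 'I_m) (i j : 'I_n) (S : {set 'I_m}) (C : {set T}).

Definition Yset : {set T} := LY setT.
Definition Xset : {set T} := LX setT.
Definition premise i : {set T} := LX (A i) :|: LY [set~ i].
Definition Xpart (C : {set T}) : {set 'I_m} := [set x | inl x \in C].

Lemma inl_liftX x S : (inl x \in LX S) = (x \in S).
Proof. by rewrite mem_imset // => ? ? []. Qed.
Lemma inr_liftX (y : 'I_n) S : (inr y \in LX S) = false.
Proof. by apply/negbTE/imsetP => -[]. Qed.
Lemma inl_liftY x (S : {set 'I_n}) : (inl x \in LY S) = false.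
Proof. by apply/negbTE/imsetP => -[]. Qed.
Lemma inr_liftY (y : 'I_n) (S : {set 'I_n}) : (inr y \in LY S) = (y \in S).
Proof. by rewrite mem_imset // => ? ? []. Qed.
Definition in_lift := (inl_liftX, inr_liftX, inl_liftY, inr_liftY).

Lemma liftX_subset S C : (LX S \subset C) = (S \subset Xpart C).
Proof.
apply/subsetP/subsetP => [h x xS|h _ /imsetP[x xS ->]]; last by have := h x xS; rewrite inE.
by rewrite inE h ?inl_liftX.
Qed.

Lemma card_Yset : #|Yset| = n.
Proof. by rewrite card_imset ?cardsT ?card_ord // => ? ? []. Qed.

Lemma card_liftX S : #|LX S| = #|S|.
Proof. by rewrite card_imset // => ? ? []. Qed.

Lemma closedb_Sigma'_main C : closedb (Sigma'_main A B) C =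
  [forall i, (premise i \subset C) ==> (LX (B i) \subset C)].
Proof. exact: closedb_imset. Qed.

Lemma closedb_Sigma' C : closedb Sig' C =
  closedb (Sigma'_main A B) C && ((Yset \subset C) ==> (Xset \subset C)).
Proof. by rewrite closedbU closedb1. Qed.

Lemma closedb_Sigma'_notin i C : inr i \notin C ->
  closedb Sig' C = (premise i \subset C) ==> (LX (B i) \subset C).
Proof.
move=> iC; rewrite closedb_Sigma' closedb_Sigma'_main.
have -> : Yset \subset C = false.
  by apply: contraNF iC => /subsetP; apply; rewrite inr_liftY inE.
rewrite andbT; apply/forallP/idP => [/(_ i) //|cl j].
have [-> //|ji] := eqVneq j i.
have -> // : premise j \subset C = false.
by apply: contraNF iC => /subsetP; apply; rewrite !inE !in_lift !inE eq_sym ji.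
Qed.

Lemma premise_notin i : inr i \notin premise i.
Proof. by rewrite !inE !in_lift !inE eqxx. Qed.

Lemma premise_gt0 i : 0 < #|premise i|.
Proof.
have /set0Pn[a aA] := A_neq0 i.
by rewrite card_gt0; apply/set0Pn; exists (inl a); rewrite !inE in_lift aA.
Qed.

Lemma premise_Sigma' i C : closedb Sig' C -> premise i \subset C -> LX (B i) \subset C.
Proof.
move=> /closedbP cl; apply: (cl (premise i, LX (B i))).
by rewrite inE; apply/orP; left; apply/imsetP; exists i.
Qed.

Lemma closedb_Sigma'_main_Y C : Yset \subset C ->
  closedb (Sigma'_main A B) C = closedb (Sigma A B) (Xpart C).
Proof.
move=> YC; rewrite closedb_Sigma'_main closedb_imset; apply: eq_forallb => i /=.
rewrite -!liftX_subset /premise subUset.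
suff -> : LY [set~ i] \subset C by rewrite andbT.
by apply: subset_trans YC; apply: imsetS; apply: subsetT.
Qed.

Lemma generator_neq0 S : generator (Sigma A B) S -> S != set0.
Proof.
rewrite /generator; have [-> gen0|//] := eqVneq S set0.
have cl0 : closedb (Sigma A B) set0.
  apply/closedbP => _ /imsetP[i _ ->] /= /subset_leq_card.
  by rewrite cards0 leqn0 cards_eq0 (negbTE (A_neq0 i)).
have := closure_min cl0 (subxx set0); rewrite gen0 => /subsetP/(_ (Ordinal m_gt0)).
by rewrite !inE => /(_ isT).
Qed.

Lemma basis_of_generator S : generator (Sigma A B) S ->
  is_basis Sig' (Sigma'_main A B :|: [set (Yset, LX S)]).
Proof.
move=> genS; split.
  apply/forall_inP => _ /setUP[/imsetP[i _ ->]|/set1P->] /=;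
    by rewrite imset_eq0 ?B_neq0 ?generator_neq0.
move=> C; rewrite closedb_Sigma' closedbU closedb1; apply: andb_id2l => cl /=.
have [YC|//] := boolP (Yset \subset C).
rewrite closedb_Sigma'_main_Y // in cl.
rewrite /= !liftX_subset; apply/idP/idP => [SC|/(subset_trans (subsetT S))//].
by rewrite -genS closure_min.
Qed.

Lemma impl_size_basis S : impl_size (Sigma'_main A B :|: [set (Yset, LX S)]) =
  impl_size (Sigma'_main A B) + (n + #|S|).
Proof.
have notin : (Yset, LX S) \notin Sigma'_main A B.
  apply/imsetP => -[i _ [Y_prem _]]; have /set0Pn[a aA] := A_neq0 i.
  by have : inl a \in Yset = false := inl_liftY a setT; rewrite Y_prem !inE in_lift aA.
by rewrite impl_size_setU1 //= card_Yset card_liftX.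
Qed.

Section OptimumBasis.
Variable Gam : {set {set T} * {set T}}.
Hypothesis Gam_opt : optimum_basis Sig' Gam.
Let Gam_basis : is_basis Sig' Gam := proj1 Gam_opt.

(* Optimality makes the premise of every implication of [Gam] non-closed. *)
Lemma Gam_premise i p : p \in Gam -> inr i \notin p.1 ->
  premise i \subset p.1 /\ p.2 \subset p.1 :|: LX (B i).
Proof.
move=> pG ip1.
have : ~~ closedb Sig' p.1.
  apply: contra (optimum_basis_nontrivial Gam_opt pG) => cl.
  exact: basis_sound Gam_basis cl pG (subxx _).
rewrite (closedb_Sigma'_notin ip1) negb_imply => /andP[prem _]; split => //.
apply: basis_sound Gam_basis _ pG (subsetUl _ _).
by rewrite (@closedb_Sigma'_notin i) ?subsetUr ?implybT // inE inr_liftX orbF.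
Qed.

Definition Gam_of i := [set p in Gam | inr i \notin p.1].
Definition Gam_Y := [set p in Gam | Yset \subset p.1].
Definition Sgam := Xpart (\bigcup_(q in Gam_Y) (q.1 :|: q.2)).

Lemma violated_Gam_of i C : inr i \notin C -> ~~ closedb Sig' C ->
  exists2 p, p \in Gam_of i & (p.1 \subset C) && ~~ (p.2 \subset C).
Proof.
move=> iC /(basis_violated Gam_basis)[p pG /andP[p1C p2C]].
exists p; last by rewrite p1C.
by rewrite inE pG; apply: contra iC; apply: (subsetP p1C).
Qed.

Lemma Gam_of_premise i : exists2 p, p \in Gam_of i & p.1 = premise i.
Proof.
have /set0Pn[b bB] := B_neq0 i.
have : ~~ closedb Sig' (premise i).
  rewrite (closedb_Sigma'_notin (premise_notin i)) subxx /=.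
  apply/subsetPn; exists (inl b); rewrite ?in_lift //.
  by rewrite !inE !in_lift orbF (disjointFl (AB_disj i) bB).
case/(violated_Gam_of (premise_notin i)) => p pi /andP[p1 _].
exists p => //; apply/eqP; rewrite eqEsubset p1.
by case/setIdP: pi => pG /(Gam_premise pG)[].
Qed.

(* Removing [inl b] from the closed set [premise i :|: LX (B i)] opens it,
   and only an implication of [Gam_of i] concluding [inl b] can see this. *)
Lemma Gam_of_cover i b : b \in B i -> exists2 p, p \in Gam_of i & inl b \in p.2.
Proof.
move=> bB; set D := premise i :|: LX (B i :\ b).
have bD : inl b \notin D.
  by rewrite !inE !in_lift !inE (disjointFl (AB_disj i) bB) eqxx.
have iD : inr i \notin D by rewrite inE inr_liftX orbF premise_notin.
have : ~~ closedb Sig' D.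
  rewrite (closedb_Sigma'_notin iD) subsetUl /=.
  by apply/subsetPn; exists (inl b); rewrite ?in_lift.
case/(violated_Gam_of iD) => p pi /andP[p1D /subsetPn[z p2z zD]].
exists p => //; case/setIdP: pi => pG /(Gam_premise pG)[_ /subsetP/(_ z p2z)].
case/setUP => [/(subsetP p1D)|/imsetP[b' b'B ez]]; first by rewrite (negbTE zD).
move: zD p2z; rewrite ez.
by have [-> //|b'b] := eqVneq b' b; rewrite /D !inE !in_lift !inE b'b b'B orbT.
Qed.

Lemma Gam_of_eq i : Gam_of i = [set (premise i, LX (B i))].
Proof.
have [p0 p0i p01] := Gam_of_premise i.
have Gam_of_B q : q \in Gam_of i -> premise i \subset q.1 /\ q.2 \subset q.1 :|: LX (B i).
  by case/setIdP => qG; apply: Gam_premise.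
apply: (impls_cover_eq1 (r := (premise i, LX (B i))) (premise_gt0 i) p0i p01) => /=.
- by move=> q /Gam_of_B[].
- apply/subsetP => _ /imsetP[b bB ->]; have [q qi bq] := Gam_of_cover bB.
  apply/bigcupP; exists q; rewrite // !inE bq orbT !in_lift orbF.
  by rewrite (disjointFl (AB_disj i) bB).
apply: (optimum_basis_replace (r := (premise i, LX (B i))) Gam_opt _ _ _ Gam_of_B) => /=.
- by apply/subsetP => q /setIdP[].
- by rewrite imset_eq0 B_neq0.
- exact: premise_Sigma'.
Qed.

Lemma Gam_Y_premise : exists2 q, q \in Gam_Y & q.1 = Yset /\ ~~ (q.2 \subset Yset).
Proof.
have : ~~ closedb Sig' Yset.
  rewrite closedb_Sigma' subxx /= negb_and; apply/orP; right.
  by apply/subsetPn; exists (inl (Ordinal m_gt0)); rewrite /Xset /Yset !in_lift ?inE.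
case/(basis_violated Gam_basis) => q qG /andP[q1Y q2Y].
have Yq1 : Yset \subset q.1.
  apply/subsetP => _ /imsetP[i _ ->]; apply/negPn/negP => iq1.
  have [/subset_trans/(_ q1Y) premY _] := Gam_premise qG iq1.
  have /set0Pn[a aA] := A_neq0 i.
  by have := subsetP premY (inl a); rewrite !inE !in_lift aA => /(_ isT).
by exists q; rewrite ?inE ?qG //; split => //; apply/eqP; rewrite eqEsubset q1Y.
Qed.

Lemma Gam_Y_eq : Gam_Y = [set (Yset, LX Sgam)].
Proof.
have [q0 q0Y [q01 q02]] := Gam_Y_premise.
have Gam_Y_Sgam q : q \in Gam_Y -> Yset \subset q.1 /\ q.2 \subset q.1 :|: LX Sgam.
  move=> qY; split; first by case/setIdP: qY.
  apply/subsetP => -[x|y] q2z; rewrite inE.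
    by rewrite in_lift inE; apply/orP; right; apply/bigcupP; exists q; rewrite // inE q2z orbT.
  by case/setIdP: qY => _ /subsetP Yq; rewrite Yq // /Yset in_lift inE.
apply: (impls_cover_eq1 (r := (Yset, LX Sgam)) _ q0Y q01) => /=.
- by rewrite card_Yset.
- by move=> q /Gam_Y_Sgam[].
- apply/subsetP => z /imsetP[x]; rewrite inE => /bigcupP[q qY xq] ->.
  by apply/bigcupP; exists q; rewrite // in_setD xq /Yset in_lift.
apply: (optimum_basis_replace (r := (Yset, LX Sgam)) Gam_opt _ _ _ Gam_Y_Sgam) => /=.
- by apply/subsetP => q /setIdP[].
- case/subsetPn: q02 => -[x|y] q2z; rewrite /Yset in_lift ?inE // => _.
  rewrite imset_eq0; apply/set0Pn; exists x; rewrite inE.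
  by apply/bigcupP; exists q0; rewrite // inE q2z orbT.
- move=> C /[swap] YC; rewrite closedb_Sigma' YC /= => /andP[_ XC].
  by apply: subset_trans XC; apply: imsetS; apply: subsetT.
Qed.

Lemma Gam_eq : Gam = Sigma'_main A B :|: [set (Yset, LX Sgam)].
Proof.
apply/eqP; rewrite eqEsubset; apply/andP; split; apply/subsetP => p.
  move=> pG; have [Yp1|/subsetPn[_ /imsetP[i _ ->] ip1]] := boolP (Yset \subset p.1).
    have : p \in Gam_Y by rewrite inE pG.
    by rewrite Gam_Y_eq => /set1P->; rewrite !inE eqxx orbT.
  have : p \in Gam_of i by rewrite inE pG.
  by rewrite Gam_of_eq => /set1P->; rewrite inE; apply/orP; left; apply/imsetP; exists i.
case/setUP => [/imsetP[i _ ->]|/set1P->].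
  by have /setIdP[] : (premise i, LX (B i)) \in Gam_of i by rewrite Gam_of_eq set11.
by have /setIdP[] : (Yset, LX Sgam) \in Gam_Y by rewrite Gam_Y_eq set11.
Qed.

Lemma Sgam_generator : generator (Sigma A B) Sgam.
Proof.
set D := Defs.closure (Sigma A B) Sgam.
have XpartD : Xpart (Yset :|: LX D) = D.
  by apply/setP => x; rewrite !inE /Yset !in_lift.
have : closedb Gam (Yset :|: LX D).
  rewrite Gam_eq closedbU closedb1 closedb_Sigma'_main_Y ?subsetUl // XpartD.
  rewrite closure_closed /=; apply: (subset_trans _ (subsetUr Yset _)).
  by apply: imsetS; apply: closure_sub.
rewrite (proj2 Gam_basis) closedb_Sigma' subsetUl /= => /andP[_].
by rewrite /Xset liftX_subset XpartD => TD; apply/eqP; rewrite eqEsubset subsetT.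
Qed.

Lemma optimum_basis_Sigma' : exists S, min_generator (Sigma A B) S /\
  Gam = Sigma'_main A B :|: [set (liftY m setT, liftX n S)].
Proof.
exists Sgam; split; last exact: Gam_eq.
split=> [|S genS]; first exact: Sgam_generator.
have := proj2 Gam_opt _ (basis_of_generator genS).
by rewrite {1}Gam_eq !impl_size_basis leq_add2l leq_add2l.
Qed.

End OptimumBasis.
End SigmaPrime.

Theorem claim2 (n m : nat) (A B : 'I_n -> {set 'I_m}) :
  1 <= n -> 1 <= m ->
  (forall i, A i != set0) -> (forall i, B i != set0) ->
  (forall i, [disjoint A i & B i]) ->
  forall Gam : {set {set 'I_m + 'I_n} * {set 'I_m + 'I_n}},
    optimum_basis (Sigma' A B) Gam ->
    exists S : {set 'I_m},
      min_generator (Sigma A B) S /\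
      Gam = Sigma'_main A B :|: [set (liftY m setT, liftX n S)].
Proof. exact: optimum_basis_Sigma'. Qed.
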